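(* Let $n\in\mathbb{Z}$ with $|n|\geq1$, $\alpha>0$, $\kappa<\alpha^{-1}$ and $\beta>0$. If $$R>\left(\frac{12\,(1+n^2(2\ln 2-1))}{\alpha^{-1}-\kappa}\right)^{1/2},$$ then there exists $u_0\in H$ such that $\|u_0\|_H^2>\beta$ and $\mathcal{I}_\kappa(u_0)<0$.
   Context: $H$ is the completion of $X=\{u\in C^1[0,R]: u(0)=0=u(R)\}$ with respect to the inner product $(u,\tilde u)=\int_0^R\left\{ru_r\tilde u_r+\frac1r u\tilde u\right\}dr$, and $\|\cdot\|_H$ is the induced norm. The functional $\mathcal{I}_\kappa:H\to\mathbb{R}$ is $$\mathcal{I}_\kappa(u)=\frac12\int_0^R\left\{ru_r^2+\frac{n^2}{r}u^2-2(\alpha^{-1}-\kappa)ru^2+2\alpha^{-2}r\ln(1+\alpha u^2)\right\}dr.$$ *)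

From Stdlib Require Export Reals.
From Coquelicot Require Export Coquelicot.
Open Scope R_scope.

(* A C^1 function on [0,Rad] is represented by a function R -> R that is
   differentiable at every point of [0,Rad] with derivative continuous there
   (every C^1[0,Rad] function admits such an extension). *)
Definition in_X (Rad : R) (u : R -> R) : Prop :=
  u 0 = 0 /\ u Rad = 0 /\
  forall r, 0 <= r <= Rad -> ex_derive u r /\ continuous (Derive u) r.

Definition H_norm_sq (Rad : R) (u : R -> R) : R :=
  RInt (fun r => r * (Derive u r) ^ 2 + / r * (u r) ^ 2) 0 Rad.

Definition I_kappa (n : Z) (alpha kappa Rad : R) (u : R -> R) : R :=
  / 2 * RInt (fun r => r * (Derive u r) ^ 2 + (IZR n) ^ 2 / r * (u r) ^ 2
                        - 2 * (/ alpha - kappa) * r * (u r) ^ 2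
                        + 2 * / (alpha ^ 2) * r * ln (1 + alpha * (u r) ^ 2)) 0 Rad.

(* Test the functional on the multiples s u of the bubble u(r) = r (Rad - r).
   The quadratic terms of the integrand of I_kappa(s u) integrate to
   s^2 Rad^4 ((2 + n^2)/12 - c Rad^2/30) with c = alpha^-1 - kappa, and the
   radius condition (through ln 2 > 0.634) makes this coefficient negative.
   The logarithmic term is at most Rad^2 alpha^-2 ln (1 + alpha s^2 Rad^4/16),
   which grows only linearly in s, so I_kappa(s u) < 0 for s large, while
   ||s u||_H^2 = s^2 Rad^4 / 4 exceeds beta. *)

From Stdlib Require Import Reals Lra Psatz.
From Coquelicot Require Import Coquelicot.
Open Scope R_scope.

Lemma ln_le_sub_1 y : 0 < y -> ln y <= y - 1.
Proof.
  intros Hy.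
  pose proof (exp_ineq1_le (ln y)) as Hexp.
  rewrite exp_ln in Hexp; lra.
Qed.

Lemma one_sub_inv_le_ln y : 0 < y -> 1 - / y <= ln y.
Proof.
  intros Hy.
  pose proof (ln_le_sub_1 (/ y) (Rinv_0_lt_compat _ Hy)) as Hinv.
  rewrite ln_Rinv in Hinv; lra.
Qed.

Lemma ln_2_gt : 0.634 < ln 2.
Proof.
  (* ln 2 = ln (5/4) + ln (6/5) + ln (7/6) + ln (8/7) >= 1/5 + 1/6 + 1/7 + 1/8. *)
  replace 2 with (5/4 * (6/5) * (7/6) * (8/7)) by field.
  rewrite !ln_mult by lra.
  pose proof (one_sub_inv_le_ln (5/4)).
  pose proof (one_sub_inv_le_ln (6/5)).
  pose proof (one_sub_inv_le_ln (7/6)).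
  pose proof (one_sub_inv_le_ln (8/7)).
  replace (/ (5/4)) with (4/5) in * by field.
  replace (/ (6/5)) with (5/6) in * by field.
  replace (/ (7/6)) with (6/7) in * by field.
  replace (/ (8/7)) with (7/8) in * by field.
  lra.
Qed.

Lemma ln_le_2_sqrt y : 0 < y -> ln y <= 2 * sqrt y.
Proof.
  intros Hy.
  assert (Hsqrt : 0 < sqrt y) by (apply sqrt_lt_R0; lra).
  rewrite <- (sqrt_sqrt y) at 1 by lra.
  rewrite ln_mult by lra.
  pose proof (ln_le_sub_1 _ Hsqrt); lra.
Qed.

Lemma RInt_antiderivative (f F : R -> R) a b :
  (forall x, is_derive F x (f x)) -> (forall x, ex_derive f x) ->
  RInt f a b = F b - F a.
Proof.
  intros HF Hf.
  apply is_RInt_unique, (is_RInt_derive F f); auto.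
  intros x _; apply (ex_derive_continuous f), Hf.
Qed.

Lemma ex_RInt_derivable (f : R -> R) a b :
  (forall x, ex_derive f x) -> ex_RInt f a b.
Proof.
  intros Hf.
  apply (ex_RInt_continuous (V := R_CompleteNormedModule)).
  intros x _; apply (ex_derive_continuous f), Hf.
Qed.

Definition bubble (s Rad r : R) : R := s * r * (Rad - r).

Section Bubble.
Variables s Rad : R.

Lemma Derive_bubble r : Derive (bubble s Rad) r = s * (Rad - 2 * r).
Proof. apply is_derive_unique; unfold bubble; auto_derive; auto; ring. Qed.

Lemma bubble_in_X : in_X Rad (bubble s Rad).
Proof.
  unfold in_X; repeat split; try (unfold bubble; ring).
  - unfold bubble; auto_derive; auto.
  - apply (continuous_ext (fun r => s * (Rad - 2 * r))).
    { intros; symmetry; apply Derive_bubble. }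
    apply (ex_derive_continuous (fun r : R => s * (Rad - 2 * r))); auto_derive; auto.
Qed.

Lemma bubble_sqr_le_peak r :
  0 <= r <= Rad -> bubble s Rad r ^ 2 <= (s * Rad ^ 2 / 4) ^ 2.
Proof.
  intros Hr.
  assert (Hprod : 0 <= r * (Rad - r) <= Rad ^ 2 / 4)
    by (pose proof (pow2_ge_0 (r - Rad / 2)); split; nra).
  replace (bubble s Rad r ^ 2) with (s ^ 2 * (r * (Rad - r)) ^ 2)
    by (unfold bubble; ring).
  replace ((s * Rad ^ 2 / 4) ^ 2) with (s ^ 2 * (Rad ^ 2 / 4) ^ 2) by field.
  apply Rmult_le_compat_l; [apply pow2_ge_0 | apply pow_incr; lra].
Qed.

Hypothesis Rad_gt0 : 0 < Rad.

Lemma H_norm_sq_bubble : H_norm_sq Rad (bubble s Rad) = s ^ 2 * Rad ^ 4 / 4.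
Proof.
  unfold H_norm_sq.
  rewrite (RInt_ext _ (fun r => s ^ 2 * (r * (Rad - 2 * r) ^ 2 + r * (Rad - r) ^ 2))).
  2:{ intros r Hr; rewrite Rmin_left, Rmax_right in Hr by lra.
      rewrite Derive_bubble; unfold bubble; simpl; field; lra. }
  rewrite (RInt_antiderivative _ (fun r => s ^ 2 *
             (Rad ^ 2 * r ^ 2 - 2 * Rad * r ^ 3 + 5 * r ^ 4 / 4))).
  - field.
  - intros; auto_derive; auto; field.
  - intros; auto_derive; auto.
Qed.

Lemma I_kappa_bubble_le (n : Z) alpha kappa : 0 < alpha ->
  I_kappa n alpha kappa Rad (bubble s Rad) <=
  / 2 * (Rad ^ 2 / alpha ^ 2 * ln (1 + alpha * (s * Rad ^ 2 / 4) ^ 2)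
         - s ^ 2 * Rad ^ 4 * ((/ alpha - kappa) * Rad ^ 2 / 30 - (2 + IZR n ^ 2) / 12)).
Proof.
  intros Halpha.
  set (c := / alpha - kappa); set (N := IZR n).
  set (peak := ln (1 + alpha * (s * Rad ^ 2 / 4) ^ 2)).
  set (P := fun r => r * (s * (Rad - 2 * r)) ^ 2 + N ^ 2 * s ^ 2 * r * (Rad - r) ^ 2
                     - 2 * c * r * bubble s Rad r ^ 2).
  assert (Hw : 0 < 2 * / alpha ^ 2)
    by (apply Rmult_lt_0_compat; [lra | apply Rinv_0_lt_compat, pow_lt, Halpha]).
  unfold I_kappa; apply Rmult_le_compat_l; [lra |].
  rewrite (RInt_ext _ (fun r => P r + 2 * / alpha ^ 2 * r * ln (1 + alpha * bubble s Rad r ^ 2))).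
  2:{ intros r Hr; rewrite Rmin_left, Rmax_right in Hr by lra.
      unfold P; rewrite Derive_bubble; fold N c; unfold bubble; simpl; field; lra. }
  apply Rle_trans with (RInt (fun r => P r + 2 * / alpha ^ 2 * r * peak) 0 Rad).
  - apply RInt_le; [lra | | |].
    + apply ex_RInt_derivable; intros r.
      unfold P, bubble; auto_derive.
      pose proof (pow2_ge_0 (s * r * (Rad - r))); simpl; nra.
    + apply ex_RInt_derivable; intros r.
      unfold P, bubble; auto_derive; auto.
    + intros r Hr.
      assert (Hln : ln (1 + alpha * bubble s Rad r ^ 2) <= peak).
      { pose proof (bubble_sqr_le_peak r (conj (Rlt_le _ _ (proj1 Hr)) (Rlt_le _ _ (proj2 Hr)))).
        pose proof (pow2_ge_0 (bubble s Rad r)).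
        unfold peak; apply ln_le; nra. }
      pose proof (Rmult_le_compat_l (2 * / alpha ^ 2 * r) _ _ ltac:(nra) Hln); lra.
  - right; rewrite (RInt_antiderivative _ (fun r =>
        s ^ 2 * (Rad ^ 2 * r ^ 2 / 2 - 4 * Rad * r ^ 3 / 3 + r ^ 4)
      + N ^ 2 * s ^ 2 * (Rad ^ 2 * r ^ 2 / 2 - 2 * Rad * r ^ 3 / 3 + r ^ 4 / 4)
      - 2 * c * s ^ 2 * (Rad ^ 2 * r ^ 4 / 4 - 2 * Rad * r ^ 5 / 5 + r ^ 6 / 6)
      + / alpha ^ 2 * peak * r ^ 2)).
    + field; lra.
    + intros; unfold P, bubble; auto_derive; auto; field; lra.
    + intros; unfold P, bubble; auto_derive; auto.
Qed.

End Bubble.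

Lemma ln_peak_le_linear alpha Rad s : 0 < alpha -> 1 <= s ->
  ln (1 + alpha * (s * Rad ^ 2 / 4) ^ 2) <= 2 * s * sqrt (1 + alpha * Rad ^ 4 / 16).
Proof.
  intros Halpha Hs.
  assert (HR4 : 0 <= Rad ^ 4) by (replace (Rad ^ 4) with ((Rad ^ 2) ^ 2) by ring; apply pow2_ge_0).
  assert (Hpeak : 0 <= alpha * (s * Rad ^ 2 / 4) ^ 2) by (apply Rmult_le_pos; [lra | apply pow2_ge_0]).
  eapply Rle_trans; [apply ln_le_2_sqrt; lra |].
  rewrite Rmult_assoc; apply Rmult_le_compat_l; [lra |].
  rewrite <- (sqrt_square s) at 2 by lra.
  rewrite <- sqrt_mult by nra.
  apply sqrt_le_1_alt.
  replace ((s * Rad ^ 2 / 4) ^ 2) with (s ^ 2 * (Rad ^ 4 / 16)) by field.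
  assert (Hs2 : 1 <= s * s) by nra.
  simpl in *; nra.
Qed.

Lemma radius_condition_coeff_pos (N c Rad : R) : 1 <= Rabs N -> 0 < c ->
  Rad > sqrt (12 * (1 + N ^ 2 * (2 * ln 2 - 1)) / c) ->
  0 < Rad /\ (2 + N ^ 2) / 12 < c * Rad ^ 2 / 30.
Proof.
  intros HN Hc HRad.
  pose proof ln_2_gt.
  assert (HN2 : 1 <= N ^ 2) by (rewrite <- pow2_abs; simpl; nra).
  set (K := 12 * (1 + N ^ 2 * (2 * ln 2 - 1))) in *.
  assert (HK : 12 + 3.2 * N ^ 2 <= K) by (unfold K; nra).
  assert (HKc : 0 < K / c) by (apply Rdiv_lt_0_compat; lra).
  pose proof (sqrt_lt_R0 _ HKc).
  assert (HRad2 : K / c < Rad ^ 2).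
  { rewrite <- (sqrt_sqrt (K / c)) by lra; simpl; nra. }
  assert (HcRad2 : K < c * Rad ^ 2).
  { replace K with (c * (K / c)) by (field; lra); nra. }
  split; lra.
Qed.

Lemma I_kappa_bubble_neg (n : Z) alpha kappa Rad s :
  0 < alpha -> 0 < Rad -> 1 <= s ->
  let D := (/ alpha - kappa) * Rad ^ 2 / 30 - (2 + IZR n ^ 2) / 12 in
  2 * sqrt (1 + alpha * Rad ^ 4 / 16) < s * (alpha ^ 2 * Rad ^ 2 * D) ->
  I_kappa n alpha kappa Rad (bubble s Rad) < 0.
Proof.
  intros Halpha HRad Hs D Hdom.
  eapply Rle_lt_trans; [apply I_kappa_bubble_le; lra |]; fold D.
  pose proof (ln_peak_le_linear alpha Rad s Halpha Hs) as Hlog.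
  set (Q := sqrt (1 + alpha * Rad ^ 4 / 16)) in *.
  assert (Ha2 : 0 < alpha ^ 2) by (apply pow_lt; lra).
  assert (Hw : 0 <= Rad ^ 2 / alpha ^ 2)
    by (apply Rdiv_le_0_compat; [apply pow2_ge_0 | lra]).
  assert (Hw' : 0 < s * Rad ^ 2 / alpha ^ 2)
    by (apply Rdiv_lt_0_compat; [apply Rmult_lt_0_compat, pow_lt |]; lra).
  pose proof (Rmult_le_compat_l _ _ _ Hw Hlog) as Hlog'.
  pose proof (Rmult_lt_compat_l _ _ _ Hw' Hdom) as Hdom'.
  replace (Rad ^ 2 / alpha ^ 2 * (2 * s * Q))
    with (s * Rad ^ 2 / alpha ^ 2 * (2 * Q)) in Hlog' by (field; lra).
  replace (s * Rad ^ 2 / alpha ^ 2 * (s * (alpha ^ 2 * Rad ^ 2 * D)))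
    with (s ^ 2 * Rad ^ 4 * D) in Hdom' by (field; lra).
  lra.
Qed.

Theorem lemma2p2 (n : Z) (alpha kappa beta Rad : R) :
  1 <= Rabs (IZR n) -> 0 < alpha -> kappa < / alpha -> 0 < beta ->
  Rad > sqrt (12 * (1 + (IZR n) ^ 2 * (2 * ln 2 - 1)) / (/ alpha - kappa)) ->
  exists u0 : R -> R, in_X Rad u0 /\ H_norm_sq Rad u0 > beta /\
    I_kappa n alpha kappa Rad u0 < 0.
Proof.
  intros Hn Halpha Hkappa Hbeta HRad.
  destruct (radius_condition_coeff_pos (IZR n) (/ alpha - kappa) Rad Hn ltac:(lra) HRad)
    as [HRad0 Hcoeff].
  set (D := (/ alpha - kappa) * Rad ^ 2 / 30 - (2 + IZR n ^ 2) / 12).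
  assert (HD : 0 < D) by (unfold D; lra).
  assert (Hden : 0 < alpha ^ 2 * Rad ^ 2 * D)
    by (repeat apply Rmult_lt_0_compat; try apply pow_lt; lra).
  assert (HR4 : 0 < Rad ^ 4) by (apply pow_lt; lra).
  set (k := 2 * sqrt (1 + alpha * Rad ^ 4 / 16) / (alpha ^ 2 * Rad ^ 2 * D)).
  set (b := 4 * beta / Rad ^ 4).
  assert (Hk0 : 0 <= k).
  { apply Rdiv_le_0_compat; [pose proof (sqrt_pos (1 + alpha * Rad ^ 4 / 16)) |]; lra. }
  assert (Hb0 : 0 < b) by (apply Rdiv_lt_0_compat; lra).
  exists (bubble (1 + k + b) Rad); split; [apply bubble_in_X | split].
  - rewrite H_norm_sq_bubble by lra.
    replace beta with (b * Rad ^ 4 / 4) by (unfold b; field; lra).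
    assert (Hs2 : b < (1 + k + b) ^ 2) by nra.
    pose proof (Rmult_lt_compat_r _ _ _ HR4 Hs2); lra.
  - apply I_kappa_bubble_neg; try lra; fold D.
    replace (2 * sqrt (1 + alpha * Rad ^ 4 / 16)) with (k * (alpha ^ 2 * Rad ^ 2 * D))
      by (unfold k; field; lra).
    apply Rmult_lt_compat_r; lra.
Qed.
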